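(* Let $\varphi\colon G\to G$ and $\psi\colon H\to H$ be endomorphisms of abelian groups and suppose $\psi$ is a factor of $\varphi$. Then: (1) if $G$ is torsion and $\varphi$ is positively expansive, then $\psi$ is positively expansive; (2) if $G$ is torsion, $\varphi$ and $\psi$ are automorphisms and $\varphi$ is expansive, then $\psi$ is expansive; (3) if $\varphi$ and $\psi$ are conjugate, then $\varphi$ is positively expansive if and only if $\psi$ is, and, when they are automorphisms, $\varphi$ is expansive if and only if $\psi$ is.
   Context: $\mathbb N=\{0,1,2,\dots\}$. An endomorphism $\varphi$ of an abelian group $G$ is positively expansive if there is a finite subgroup $S\leq G$ such that for every finite subgroup $F\leq G$ there is $n\in\mathbb N$ with $F\subseteq\sum_{k=0}^n\varphi^kS$. An automorphism $\varphi$ is expansive if there is a finite subgroup $S\leq G$ such that for every finite subgroup $F\leq G$ there is $n\in\mathbb N$ with $F\subseteq\sum_{|k|\leq n}\varphi^kS$. $\psi$ is a factor of $\varphi$ if there is a surjective homomorphism $\pi\colon G\to H$ with $\pi\circ\varphi=\psi\circ\pi$; they are conjugate if such a $\pi$ can be chosen to be an isomorphism. *)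

From HB Require Import structures.
From mathcomp Require Import all_boot all_order all_algebra.
Set Implicit Arguments. Unset Strict Implicit. Unset Printing Implicit Defensive.
Import GRing.Theory.
Local Open Scope ring_scope.

Definition is_subgroup (G : zmodType) (S : G -> Prop) : Prop :=
  S 0 /\ forall x y, S x -> S y -> S (x - y).

Definition is_finite_set (G : zmodType) (S : G -> Prop) : Prop :=
  exists s : seq G, forall x, S x <-> x \in s.

Definition finite_subgroup (G : zmodType) (S : G -> Prop) : Prop :=
  is_subgroup S /\ is_finite_set S.

Definition in_pos_sum (G : zmodType) (phi : G -> G) (S : G -> Prop) (n : nat)
    (x : G) : Prop :=
  exists s : nat -> G, (forall k, (k <= n)%N -> S (s k)) /\
    x = \sum_(k < n.+1) iter k phi (s k).

(* x \in \sum_{|k| <= n} phi^k S, where phi^{-1} = phii *)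
Definition in_bil_sum (G : zmodType) (phi phii : G -> G) (S : G -> Prop)
    (n : nat) (x : G) : Prop :=
  exists s t : nat -> G,
    (forall k, (k <= n)%N -> S (s k)) /\ (forall k, (k < n)%N -> S (t k)) /\
    x = \sum_(k < n.+1) iter k phi (s k) + \sum_(k < n) iter k.+1 phii (t k).

Definition pos_expansive (G : zmodType) (phi : G -> G) : Prop :=
  exists S, finite_subgroup S /\
    forall F, finite_subgroup F -> exists n, forall x, F x -> in_pos_sum phi S n x.

(* for an automorphism phi with inverse phii *)
Definition expansive (G : zmodType) (phi phii : G -> G) : Prop :=
  exists S, finite_subgroup S /\
    forall F, finite_subgroup F -> exists n, forall x, F x -> in_bil_sum phi phii S n x.

Definition torsion (G : zmodType) : Prop :=
  forall x : G, exists n, (0 < n)%N /\ x *+ n = 0.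

Definition is_factor (G H : zmodType) (phi : {additive G -> G})
    (psi : {additive H -> H}) : Prop :=
  exists pi : {additive G -> H}, (forall y : H, exists x : G, pi x = y) /\ forall x, pi (phi x) = psi (pi x).

Definition conjugate (G H : zmodType) (phi : {additive G -> G})
    (psi : {additive H -> H}) : Prop :=
  exists pi : {additive G -> H}, bijective pi /\ forall x, pi (phi x) = psi (pi x).

From HB Require Import structures.
From mathcomp Require Import all_boot all_order all_algebra.
Set Implicit Arguments. Unset Strict Implicit. Unset Printing Implicit Defensive.
Import GRing.Theory.
Local Open Scope ring_scope.

(* A factor map pi carries phi^k S onto psi^k (pi S), so the image of an
   expansive subgroup S covers psi^k-sums of images.  It remains to cover each
   finite subgroup F of H: its points lift to points of finite subgroups of G
   (cyclic ones when G is torsion, or pi^-1 F when pi is bijective), each such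
   lift is covered at some level n, and F, being finite, is covered at the
   largest of these levels. *)

Definition image_set (G H : zmodType) (pi : G -> H) (S : G -> Prop) : H -> Prop :=
  fun y => exists2 x, S x & pi x = y.

(* [pos_expansive phi] and [expansive phi phii] unfold to
   [expansive_for (in_pos_sum phi)] and [expansive_for (in_bil_sum phi phii)]. *)
Definition expansive_for (G : zmodType) (sums : (G -> Prop) -> nat -> G -> Prop) :=
  exists S, finite_subgroup S /\
    forall F, finite_subgroup F -> exists n, forall x, F x -> sums S n x.

Definition lifts_finite_subgroups (G H : zmodType) (pi : G -> H) : Prop :=
  forall F y, finite_subgroup F -> F y ->
    exists2 E, finite_subgroup E & exists2 x, E x & pi x = y.

Lemma seq_uniform_bound (T : eqType) (P : nat -> T -> Prop) (s : seq T) :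
    (forall n m y, (n <= m)%N -> P n y -> P m y) ->
    (forall y, y \in s -> exists n, P n y) ->
  exists n, forall y, y \in s -> P n y.
Proof.
move=> P_mono; elim: s => [|a s IHs] s_bounded; first by exists 0%N.
have [na Pa] := s_bounded a (mem_head a s).
have [ns Ps] : exists n, forall y, y \in s -> P n y.
  by apply: IHs => y ys; apply: s_bounded; rewrite inE ys orbT.
exists (maxn na ns) => y; rewrite inE => /predU1P [->|ys].
  exact: P_mono (leq_maxl na ns) Pa.
exact: P_mono (leq_maxr na ns) (Ps y ys).
Qed.

Section SubgroupImages.
Variables (G H : zmodType) (pi : {additive G -> H}).

Lemma finite_subgroup_image S :
  finite_subgroup S -> finite_subgroup (image_set pi S).
Proof.
move=> [[S0 SB] [s Ss]]; split; first split.
- by exists 0; rewrite ?raddf0.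
- move=> _ _ [a Sa <-] [b Sb <-]; exists (a - b); [exact: SB | exact: raddfB].
- exists (map pi s) => y; split.
  + by move=> [a /Ss sa <-]; apply: map_f.
  + by move=> /mapP [a /Ss Sa ->]; exists a.
Qed.

Lemma finite_subgroup_preimage (g : H -> G) F :
  cancel pi g -> cancel g pi ->
  finite_subgroup F -> finite_subgroup (fun x => F (pi x)).
Proof.
move=> piK gK [[F0 FB] [s Fs]]; split; first split.
- by rewrite raddf0.
- by move=> x y Fx Fy; rewrite raddfB; apply: FB.
- exists (map g s) => x; split.
  + by move=> /Fs sx; rewrite -(piK x); apply: map_f.
  + by move=> /mapP [y /Fs Fy ->]; rewrite gK.
Qed.

End SubgroupImages.

Lemma finite_subgroup_cyclic (G : zmodType) (x : G) m :
  (0 < m)%N -> x *+ m = 0 -> finite_subgroup (fun z => exists i, z = x *+ i).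
Proof.
move=> m_gt0 xm0.
have xmod i : x *+ i = x *+ (i %% m).
  by rewrite {1}(divn_eq i m) mulrnDr mulnC mulrnA xm0 mul0rn add0r.
split; first split.
- by exists 0%N.
- move=> _ _ [i ->] [j ->]; exists (i + (m - j %% m))%N.
  by rewrite mulrnDr mulrnBr ?(ltnW (ltn_pmod j m_gt0)) // xm0 -xmod sub0r.
- exists [seq x *+ i | i <- iota 0 m] => z; split.
  + by move=> [i ->]; rewrite xmod; apply: map_f; rewrite mem_iota ltn_pmod.
  + by move=> /mapP [i _ ->]; exists i.
Qed.

Lemma torsion_lifts_finite_subgroups (G H : zmodType) (pi : G -> H) :
  (forall y, exists x, pi x = y) -> torsion G -> lifts_finite_subgroups pi.
Proof.
move=> pi_surj torG F y _ _; have [x pix] := pi_surj y.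
have [m [m_gt0 xm0]] := torG x.
exists (fun z => exists i, z = x *+ i).
  exact: finite_subgroup_cyclic m_gt0 xm0.
by exists x => //; exists 1%N.
Qed.

Lemma bijective_lifts_finite_subgroups (G H : zmodType) (pi : {additive G -> H}) :
  bijective pi -> lifts_finite_subgroups pi.
Proof.
move=> [g piK gK] F y finF Fy; exists (fun x => F (pi x)).
  exact: finite_subgroup_preimage piK gK finF.
by exists (g y); rewrite gK.
Qed.

Section Transfer.
Variables (G H : zmodType) (pi : {additive G -> H}).
Variables (sumsG : (G -> Prop) -> nat -> G -> Prop)
          (sumsH : (H -> Prop) -> nat -> H -> Prop).
Hypothesis sums_image :
  forall S n x, sumsG S n x -> sumsH (image_set pi S) n (pi x).
Hypothesis sums_mono :
  forall S n m y, S 0 -> (n <= m)%N -> sumsH S n y -> sumsH S m y.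

Lemma expansive_for_transfer :
  lifts_finite_subgroups pi -> expansive_for sumsG -> expansive_for sumsH.
Proof.
move=> lift [S [finS S_covers]]; have finSpi := finite_subgroup_image pi finS.
exists (image_set pi S); split => // F finF; have [_ [s Fs]] := finF.
have [n Pn] : exists n, forall y, y \in s -> sumsH (image_set pi S) n y.
  apply: seq_uniform_bound => [n m y|y /Fs Fy].
    by apply: sums_mono; case: finSpi => [[]].
  have [E finE [x Ex <-]] := lift _ _ finF Fy; have [n En] := S_covers E finE.
  by exists n; apply/sums_image/En.
by exists n => y /Fs; apply: Pn.
Qed.

End Transfer.

Lemma iter_morph (G H : zmodType) (pi : G -> H) (phi : G -> G) (psi : H -> H) :
  {morph pi : x / phi x >-> psi x} ->
  forall k, {morph pi : x / iter k phi x >-> iter k psi x}.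
Proof. by move=> pi_phi; elim=> [|k IHk] x //=; rewrite pi_phi IHk. Qed.

Lemma iter_fix0 (G : zmodType) (phi : G -> G) : phi 0 = 0 -> forall k, iter k phi 0 = 0.
Proof. by move=> phi0; elim=> //= k ->. Qed.

Lemma sum_ord_pad (G : zmodType) (f : nat -> G -> G) (s : nat -> G) n m :
    (forall k, f k 0 = 0) -> (n <= m)%N ->
  \sum_(k < n) f k (s k) = \sum_(k < m) f k (if (k < n)%N then s k else 0).
Proof.
move=> f0 nm; rewrite (big_ord_widen m (fun k => f k (s k))) // big_mkcond /=.
by apply: eq_bigr => k _; case: ifP; rewrite ?f0.
Qed.

Section IteratedSums.
Variables (G H : zmodType) (pi : {additive G -> H}).
Variables (phi phii : G -> G) (psi psii : H -> H).
Hypotheses (pi_phi : {morph pi : x / phi x >-> psi x})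
           (pi_phii : {morph pi : x / phii x >-> psii x}).

Lemma in_pos_sum_image S n x :
  in_pos_sum phi S n x -> in_pos_sum psi (image_set pi S) n (pi x).
Proof.
move=> [s [Ss ->]]; exists (fun k => pi (s k)); split.
  by move=> k kn; exists (s k); first exact: Ss.
by rewrite raddf_sum; apply: eq_bigr => k _; apply: iter_morph.
Qed.

Lemma in_bil_sum_image S n x :
  in_bil_sum phi phii S n x -> in_bil_sum psi psii (image_set pi S) n (pi x).
Proof.
move=> [s [t [Ss [St ->]]]]; exists (fun k => pi (s k)), (fun k => pi (t k)).
split; first by move=> k kn; exists (s k); first exact: Ss.
split; first by move=> k kn; exists (t k); first exact: St.
rewrite raddfD !raddf_sum; congr (_ + _); apply: eq_bigr => k _.
  exact: iter_morph.
exact: (iter_morph pi_phii k.+1).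
Qed.

End IteratedSums.

Section SumsMonotone.
Variables (G : zmodType) (phi phii : G -> G) (S : G -> Prop).
Hypotheses (phi0 : phi 0 = 0) (phii0 : phii 0 = 0) (S0 : S 0).

Lemma in_pos_sum_mono n m x :
  (n <= m)%N -> in_pos_sum phi S n x -> in_pos_sum phi S m x.
Proof.
move=> nm [s [Ss ->]]; exists (fun k => if (k < n.+1)%N then s k else 0).
split; first by move=> k _; case: ifP => // kn; apply: Ss.
by apply: (@sum_ord_pad G (fun k => iter k phi)) => //; apply: iter_fix0.
Qed.

Lemma in_bil_sum_mono n m x :
  (n <= m)%N -> in_bil_sum phi phii S n x -> in_bil_sum phi phii S m x.
Proof.
move=> nm [s [t [Ss [St ->]]]].
exists (fun k => if (k < n.+1)%N then s k else 0),
       (fun k => if (k < n)%N then t k else 0).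
split; first by move=> k _; case: ifP => // kn; apply: Ss.
split; first by move=> k _; case: ifP => // kn; apply: St.
congr (_ + _).
  by apply: (@sum_ord_pad G (fun k => iter k phi)) => //; apply: iter_fix0.
by apply: (@sum_ord_pad G (fun k => iter k.+1 phii)) => // k; apply: iter_fix0.
Qed.

End SumsMonotone.

Lemma morph_inverse (G H : zmodType) (pi : G -> H) (phi phii : G -> G) (psi psii : H -> H) :
    cancel phii phi -> cancel psi psii ->
  {morph pi : x / phi x >-> psi x} -> {morph pi : x / phii x >-> psii x}.
Proof. by move=> phiiK psiK pi_phi x; rewrite -{2}(phiiK x) pi_phi psiK. Qed.

Section ExpansiveTransfer.
Variables (G H : zmodType) (pi : {additive G -> H}).
Variables (phi : {additive G -> G}) (psi : {additive H -> H}).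
Hypotheses (pi_phi : {morph pi : x / phi x >-> psi x})
           (lift : lifts_finite_subgroups pi).

Lemma pos_expansive_transfer : pos_expansive phi -> pos_expansive psi.
Proof.
apply: (@expansive_for_transfer _ _ pi (in_pos_sum phi) (in_pos_sum psi)) lift.
  exact: in_pos_sum_image.
by move=> S n m y S0; apply: in_pos_sum_mono; rewrite ?raddf0.
Qed.

Lemma expansive_transfer (phii : G -> G) (psii : H -> H) :
  cancel phii phi -> cancel psi psii -> expansive phi phii -> expansive psi psii.
Proof.
move=> phiiK psiK; have psii0 : psii 0 = 0 by rewrite -{1}(raddf0 psi) psiK.
apply: (@expansive_for_transfer _ _ pi (in_bil_sum phi phii) (in_bil_sum psi psii))
  lift.
  exact/in_bil_sum_image/(morph_inverse phiiK psiK).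
by move=> S n m y S0; apply: in_bil_sum_mono; rewrite ?raddf0.
Qed.

End ExpansiveTransfer.

Lemma conjugate_sym (G H : zmodType) (phi : {additive G -> G}) (psi : {additive H -> H}) :
  conjugate phi psi -> conjugate psi phi.
Proof.
move=> [pi [[g piK gK] pi_phi]].
pose g' : {additive H -> G} :=
  HB.pack g (GRing.isNmodMorphism.Build H G g (can2_nmod_morphism piK gK)).
exists g'; split; first by exists pi.
by move=> y /=; rewrite -{1}(gK y) -pi_phi piK.
Qed.

Lemma conjugate_pos_expansive (G H : zmodType) (phi : {additive G -> G})
    (psi : {additive H -> H}) :
  conjugate phi psi -> pos_expansive phi -> pos_expansive psi.
Proof.
move=> [pi [pi_bij pi_phi]].
exact: pos_expansive_transfer pi_phi (bijective_lifts_finite_subgroups pi_bij).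
Qed.

Lemma conjugate_expansive (G H : zmodType) (phi : {additive G -> G})
    (psi : {additive H -> H}) (phii : G -> G) (psii : H -> H) :
    conjugate phi psi -> cancel phii phi -> cancel psi psii ->
  expansive phi phii -> expansive psi psii.
Proof.
move=> [pi [pi_bij pi_phi]].
exact: expansive_transfer pi_phi (bijective_lifts_finite_subgroups pi_bij) phii psii.
Qed.

Theorem proposition2p5 (G H : zmodType) (phi : {additive G -> G})
    (psi : {additive H -> H}) :
  is_factor phi psi ->
  (torsion G -> pos_expansive phi -> pos_expansive psi) /\
  (forall phii : G -> G, forall psii : H -> H,
     cancel phi phii -> cancel phii phi -> cancel psi psii -> cancel psii psi ->
     torsion G -> expansive phi phii -> expansive psi psii) /\
  (conjugate phi psi ->
     (pos_expansive phi <-> pos_expansive psi) /\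
     (forall phii : G -> G, forall psii : H -> H,
        cancel phi phii -> cancel phii phi -> cancel psi psii -> cancel psii psi ->
        (expansive phi phii <-> expansive psi psii))).
Proof.
move=> [pi [pi_surj pi_phi]].
have lift := torsion_lifts_finite_subgroups pi_surj.
split; [|split].
- by move=> /lift; apply: pos_expansive_transfer.
- move=> phii psii _ phiiK psiK _ /lift pi_lifts.
  exact: expansive_transfer pi_lifts phii psii phiiK psiK.
move=> conj; have conj' := conjugate_sym conj.
split; first by split; apply: conjugate_pos_expansive.
move=> phii psii phiK phiiK psiK psiiK.
by split; [exact: conjugate_expansive conj phiiK psiK
          | exact: conjugate_expansive conj' psiiK phiK].
Qed.
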